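(* Let $(T,A,m|_A)$ be a nonsingular open dynamical system with $m(A_\infty)=0$. Fix $\alpha\in(0,1)$ and a finite measurable partition $\mathcal B_n=\{B_1,\dots,B_n\}$ of $A$, and let $\hat A$ be the reduced domain obtained with test functions $\psi_j=\mathbf 1_{B_j}$. Then $\hat A$ is the union of those $B_k$ for which either $k\leadsto k$, or there is at least one $i$ with $i\leadsto i$ and $i\leadsto k$. In particular, $\hat A$ is measurable.
   Context: Let $(X,m)$ be a measure space, $A\subsetneq X$ measurable and $T:A\to X$ measurable such that: $H_0:=T(A)\setminus A$ is measurable; $m(A\cap T^{-1}H_0)>0$; $m(E)>0$ whenever $E\subseteq X$ is measurable with $m(T^{-1}E)>0$; and $T$ is locally finite-to-one (a nonsingular open dynamical system). Preimages are taken in $A$: $T^{-1}E=\{y\in A:T(y)\in E\}$. $A_n=\{x:x,T(x),\dots,T^n(x)\in A\}$, $A_\infty=\bigcap_nA_n$, $H_1=A\setminus A_1$. $\mathbf 1_{A_1}\psi\circ T$ is $\psi\circ T$ on $A_1$ and $0$ elsewhere in $A$. Define $\mathcal M^*:\mathbb R^{n+1}\to L^\infty(A;m)$ by $\mathcal M^*\lambda=\lambda_0\mathbf 1_{A_1}+\sum_{j=1}^n\lambda_j(\mathbf 1_{A_1}\psi_j\circ T-\alpha\psi_j)$ with $\psi_j=\mathbf 1_{B_j}$. The reduced domain $\hat A$ is obtained from $A$ by removing the support $\{\mathcal M^*\lambda\neq0\}$ of every $\mathcal M^*\lambda$ with $\lambda\in\mathbb R^{n+1}$, $\lambda_0=0$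 and $\mathcal M^*\lambda\le0$ $m$-a.e. Let $C$ be the $n\times n$ matrix $C_{kj}=m(B_k\cap T^{-1}B_j)$. Write $k\leadsto j$ if $(C^N)_{kj}>0$ for some integer $N>0$. *)

From HB Require Import structures.
From mathcomp Require Import all_boot all_order all_algebra.
From mathcomp Require Import all_classical all_reals all_analysis.
Set Implicit Arguments. Unset Strict Implicit. Unset Printing Implicit Defensive.
Import Order.TTheory GRing.Theory Num.Theory.
Local Open Scope classical_set_scope.
Local Open Scope ring_scope.

Definition preA {X : Type} (A : set X) (T : X -> X) (E : set X) : set X :=
  A `&` T @^-1` E.

Definition An {X : Type} (A : set X) (T : X -> X) (n : nat) : set X :=
  [set x | forall i, (i <= n)%N -> A (iter i T x)].

Definition Ainf {X : Type} (A : set X) (T : X -> X) : set X :=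
  \bigcap_(n in setT) An A T n.

Definition locally_finite_to_one {d} {X : measurableType d}
    (A : set X) (T : X -> X) : Prop :=
  exists F : nat -> set X,
    (forall i, measurable (F i)) /\ A = \bigcup_i F i /\
    (forall i x y, F i x -> F i y -> T x = T y -> x = y).

Definition nonsingular_open_system {d} {X : measurableType d} {R : realType}
    (m : {measure set X -> \bar R}) (A : set X) (T : X -> X) : Prop :=
  measurable A /\ A `<` setT /\ measurable_fun A T /\
  measurable (T @` A `\` A) /\
  (0 < m (preA A T (T @` A `\` A)))%E /\
  (forall E, measurable E -> (0 < m (preA A T E))%E -> (0 < m E)%E) /\
  locally_finite_to_one A T.

(* M^* lambda, as a function on A (value at points x of A);
   lambda = (lam ord0, lam (lift ord0 j))_{j < n}, psi_j = 1_{B_j}. *)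
Definition Mstar {X : Type} {R : realType} (A : set X) (T : X -> X)
    (alpha : R) (n : nat) (B : 'I_n -> set X) (lam : 'I_n.+1 -> R) (x : X) : R :=
  lam ord0 * \1_(An A T 1) x +
  \sum_(j < n) lam (lift ord0 j) *
      (\1_(An A T 1) x * \1_(B j) (T x) - alpha * \1_(B j) x).

Definition admissible {d} {X : measurableType d} {R : realType}
    (m : {measure set X -> \bar R}) (A : set X) (T : X -> X)
    (alpha : R) (n : nat) (B : 'I_n -> set X) (lam : 'I_n.+1 -> R) : Prop :=
  lam ord0 = 0 /\ {ae m, forall x, A x -> Mstar A T alpha B lam x <= 0}.

Definition Msupp {X : Type} {R : realType} (A : set X) (T : X -> X)
    (alpha : R) (n : nat) (B : 'I_n -> set X) (lam : 'I_n.+1 -> R) : set X :=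
  [set x | A x /\ Mstar A T alpha B lam x != 0].

(* Ahat is (a version, mod m-null sets, of) the reduced domain: A \ Ahat is
   the essential union of the supports of all admissible M^* lambda, i.e.
   every such support is a.e. disjoint from Ahat, and any measurable set
   a.e. containing all such supports a.e. contains A \ Ahat. *)
Definition reduced_domain {d} {X : measurableType d} {R : realType}
    (m : {measure set X -> \bar R}) (A : set X) (T : X -> X)
    (alpha : R) (n : nat) (B : 'I_n -> set X) (Ahat : set X) : Prop :=
  [/\ Ahat `<=` A,
      (forall lam, admissible m A T alpha B lam ->
         m.-negligible (Ahat `&` Msupp A T alpha B lam))
    & (forall S, measurable S ->
         (forall lam, admissible m A T alpha B lam ->
            m.-negligible (Msupp A T alpha B lam `\` S)) ->
         m.-negligible ((A `\` Ahat) `\` S))].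

Definition Cmat {d} {X : measurableType d} {R : realType}
    (m : {measure set X -> \bar R}) (A : set X) (T : X -> X)
    (n : nat) (B : 'I_n -> set X) (k j : 'I_n) : \bar R :=
  m (B k `&` preA A T (B j)).

Fixpoint Cpow {d} {X : measurableType d} {R : realType}
    (m : {measure set X -> \bar R}) (A : set X) (T : X -> X)
    (n : nat) (B : 'I_n -> set X) (N : nat) (k j : 'I_n) : \bar R :=
  match N with
  | 0 => if k == j then 1%E else 0%E
  | N'.+1 => (\sum_(l < n) Cpow m A T B N' k l * Cmat m A T B l j)%E
  end.

Definition leadsto {d} {X : measurableType d} {R : realType}
    (m : {measure set X -> \bar R}) (A : set X) (T : X -> X)
    (n : nat) (B : 'I_n -> set X) (k j : 'I_n) : Prop :=
  exists N : nat, (0 < N)%N /\ (0 < Cpow m A T B N k j)%E.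

(* Write mu_k for the coefficient of 1_{B_k} in an admissible lambda.  On
   B_k /\ T^{-1} B_j the function M^* lambda equals mu_j - alpha mu_k, so every
   edge k -> j of the transition graph (C_kj > 0) forces mu_j <= alpha mu_k.
   Blocks with mu_k < 0 are null: orbits starting there stay in such blocks,
   hence in A, until they hit the null set where M^* lambda > 0, and
   m(A_infty) = 0 together with nonsingularity makes both alternatives null.
   So weights are nonnegative at the target of an edge, vanish on cycles
   (mu_i <= alpha^N mu_i), and hence on every block reachable from a cycle,
   where M^* lambda is then 0 a.e.  Conversely the explicit weights
   (2 / alpha)^(number of blocks reachable from k), set to 0 on blocks
   reachable from a cycle, give an admissible lambda whose M^* is < 0 a.e. on
   all other blocks. *)

From HB Require Import structures.
From mathcomp Require Import all_boot all_order all_algebra.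
From mathcomp Require Import all_classical all_reals all_analysis.
From mathcomp Require Import ring.
Import Order.TTheory GRing.Theory Num.Theory.
Local Open Scope classical_set_scope.
Local Open Scope ring_scope.
Set Implicit Arguments. Unset Strict Implicit. Unset Printing Implicit Defensive.

Lemma psume_gt0P (R : realDomainType) (I : finType) (f : I -> \bar R) :
  (forall i, 0 <= f i)%E -> (0 < \sum_i f i)%E <-> exists i, (0 < f i)%E.
Proof.
move=> f_ge0; split=> [sum_gt0|[i fi_gt0]].
  apply: contrapT => /forallNP no_pos; move: sum_gt0; rewrite big1 ?ltxx // => i _.
  by apply/eqP; rewrite eq_le f_ge0 andbT leNgt; exact/negP/no_pos.
rewrite (bigD1 i) //=; apply: lt_le_trans fi_gt0 _.
by rewrite leeDl // sume_ge0.
Qed.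

Lemma negligible_bigcup_countable d (X : measurableType d) (R : realFieldType)
    (m : {measure set X -> \bar R}) (I : countType) (F : I -> set X) :
  (forall i, m.-negligible (F i)) -> m.-negligible (\bigcup_i F i).
Proof.
move=> F_negl; pose G k := oapp F set0 (unpickle k).
apply: (negligibleS _ (negligible_bigcup (F := G) _)).
  by move=> x [i _ Fix]; exists (pickle i) => //; rewrite /G pickleK.
move=> k; rewrite /G; case: unpickle => [i|] /=; first exact: F_negl.
exact: negligible_set0.
Qed.

Section open_system.
Context (R : realType) (d : measure_display) (X : measurableType d)
  (m : {measure set X -> \bar R}) (A : set X) (T : X -> X).
Hypothesis mA : measurable A.
Hypothesis mT : measurable_fun A T.
Hypothesis nonsingular :
  forall E, measurable E -> (0 < m (preA A T E))%E -> (0 < m E)%E.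
Hypothesis Ainf0 : m (Ainf A T) = 0%E.

Lemma measurable_preA E : measurable E -> measurable (preA A T E).
Proof. exact: mT. Qed.

Lemma preA_measure0 E : measurable E -> m E = 0%E -> m (preA A T E) = 0%E.
Proof.
move=> mE E0; apply/eqP; rewrite -measure_le0 leNgt; apply/negP.
by move=> /(nonsingular mE); rewrite E0 ltxx.
Qed.

Lemma An0 : An A T 0 = A.
Proof. by apply/seteqP; split=> [x /(_ 0%N (leqnn 0))|x Ax [|]]. Qed.

Lemma AnS k : An A T k.+1 = preA A T (An A T k).
Proof.
apply/seteqP; split=> [x Anx|x [Ax ATx] [|i] //]; last by rewrite iterSr; exact: ATx.
by split=> [|i ik]; [exact: (Anx 0%N)|rewrite /= -iterSr; exact: Anx].
Qed.

Lemma measurable_Ainf : measurable (Ainf A T).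
Proof.
apply: bigcapT_measurable => k; elim: k => [|k IHk]; first by rewrite An0.
by rewrite AnS; exact: measurable_preA.
Qed.

(* A point of [S] whose orbit never meets [N] lies in [Ainf A T]; the other
   points lie in some iterated preimage of [N], which is null by
   nonsingularity. *)
Lemma negligible_forward_invariant (S N : set X) : S `<=` A ->
  m.-negligible N -> (forall x, S x -> ~ N x -> S (T x)) -> m.-negligible S.
Proof.
move=> SA [N' [mN' N'0 NN']] S_inv.
pose P i := iter i (preA A T) N'.
have mP i : measurable (P i) by elim: i => //= i; exact: measurable_preA.
have P0 i : m (P i) = 0%E by elim: i => //= i; exact: preA_measure0.
have S_orbit i x : S x -> (forall t, (t <= i)%N -> ~ P t x) -> S (iter i T x).
  elim: i x => // i IHi x Sx notP; rewrite iterSr; apply: IHi.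
    by apply: S_inv Sx _ => /NN'; exact: notP 0%N isT.
  by move=> t ti Pt; apply: (notP t.+1 ti); split=> //; exact: SA.
apply: (negligibleS (A := Ainf A T `|` \bigcup_i P i)).
  move=> x Sx; have [[i _ Pix]|notP] := pselect ((\bigcup_i P i) x).
    by right; exists i.
  by left=> k _ i _; apply/SA/S_orbit => // t _ Ptx; apply: notP; exists t.
apply: negligibleU; first exact/(negligibleP _ measurable_Ainf).
apply: negligible_bigcup => i.
by apply/(negligibleP _ (mP i)); exact: P0.
Qed.

End open_system.

Definition psi_coef (R : realType) (n : nat) (lam : 'I_n.+1 -> R) (j : 'I_n) : R :=
  lam (lift ord0 j).

Section partition.
Context (R : realType) (X : Type) (A : set X) (T : X -> X) (alpha : R)
  (n : nat) (B : 'I_n -> set X).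
Hypothesis Bdisj : forall k l, k != l -> B k `&` B l = set0.
Hypothesis Bcov : \bigcup_k B k = A.

Lemma block_subset k : B k `<=` A.
Proof. by rewrite -Bcov => x Bkx; exists k. Qed.

Lemma block_cover x : A x -> exists k, B k x.
Proof. by rewrite -Bcov => -[k _ Bkx]; exists k. Qed.

Definition step_fun (c : 'I_n -> R) (y : X) : R := \sum_(j < n) c j * \1_(B j) y.

Lemma step_fun_block c k y : B k y -> step_fun c y = c k.
Proof.
move=> Bky; rewrite /step_fun (bigD1 k) //= indicE mem_set // mulr1.
rewrite big1 ?addr0 // => j jk; rewrite indicE memNset ?mulr0 // => Bjy.
by have := Bdisj jk; rewrite -subset0 => /(_ y); apply.
Qed.

Lemma step_fun_out c y : ~ A y -> step_fun c y = 0.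
Proof.
move=> Ay; rewrite /step_fun big1 // => j _.
by rewrite indicE memNset ?mulr0 // => /block_subset.
Qed.

Lemma Mstar_step_fun lam x : lam ord0 = 0 ->
  Mstar A T alpha B lam x =
  \1_(An A T 1) x * step_fun (psi_coef lam) (T x) - alpha * step_fun (psi_coef lam) x.
Proof.
move=> lam0; rewrite /Mstar lam0 mul0r add0r /step_fun mulr_sumr mulr_sumr -sumrB.
by apply: eq_bigr => j _; rewrite /psi_coef; ring.
Qed.

Lemma Mstar_exit lam x k : lam ord0 = 0 -> B k x -> ~ A (T x) ->
  Mstar A T alpha B lam x = - (alpha * psi_coef lam k).
Proof.
move=> lam0 Bkx ATx; rewrite Mstar_step_fun // (step_fun_block _ Bkx).
by rewrite step_fun_out ?mulr0 ?sub0r.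
Qed.

Lemma Mstar_move lam x k j : lam ord0 = 0 -> B k x -> B j (T x) ->
  Mstar A T alpha B lam x = psi_coef lam j - alpha * psi_coef lam k.
Proof.
move=> lam0 Bkx BjTx.
rewrite Mstar_step_fun // (step_fun_block _ Bkx) (step_fun_block _ BjTx).
have A1x : An A T 1 x.
  by move=> [|[|]] // _; [exact: block_subset Bkx|exact: block_subset BjTx].
by rewrite indicE mem_set // mul1r.
Qed.

End partition.

Section transition_graph.
Context (R : realType) (d : measure_display) (X : measurableType d)
  (m : {measure set X -> \bar R}) (A : set X) (T : X -> X)
  (n : nat) (B : 'I_n -> set X).

Definition edge (k j : 'I_n) : bool := (0 < Cmat m A T B k j)%E.

Fixpoint walk (N : nat) (k j : 'I_n) : Prop :=
  if N is N'.+1 then exists2 l, walk N' k l & edge l j else k = j.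

Lemma Cpow_ge0 N k j : (0 <= Cpow m A T B N k j)%E.
Proof.
elim: N j => [|N IHN] j /=; first by case: ifP.
by apply: sume_ge0 => l _; apply: mule_ge0.
Qed.

Lemma Cpow_gt0 N k j : (0 < Cpow m A T B N k j)%E <-> walk N k j.
Proof.
elim: N j => [|N IHN] j /=.
  by case: eqP => [->|]; split=> //; rewrite ?lte01 ?ltxx.
rewrite psume_gt0P => [|l]; last by apply: mule_ge0; rewrite ?Cpow_ge0.
split=> [[l]|[l /IHN kl lj]]; last by exists l; rewrite mule_gt0.
by rewrite mule_ge0_gt0 ?Cpow_ge0 // => /andP[/IHN kl lj]; exists l.
Qed.

Lemma leadstoP k j :
  leadsto m A T B k j <-> exists2 N, (0 < N)%N & walk N k j.
Proof. by split=> [[N [N0 /Cpow_gt0]]|[N N0 /Cpow_gt0]]; exists N. Qed.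

Lemma walk_consl N k l j : edge k l -> walk N l j -> walk N.+1 k j.
Proof.
elim: N j => [|N IHN] j kl /=; first by move=> <-; exists k.
by case=> i li ij; exists i => //; exact: IHN.
Qed.

Lemma edge_leadsto k j : edge k j -> leadsto m A T B k j.
Proof. by move=> kj; apply/leadstoP; exists 1%N => //; exists k. Qed.

Lemma leadsto_rcons i k j :
  leadsto m A T B i k -> edge k j -> leadsto m A T B i j.
Proof. by case/leadstoP=> N _ ik kj; apply/leadstoP; exists N.+1 => //; exists k. Qed.

Lemma leadsto_consl k l j :
  edge k l -> leadsto m A T B l j -> leadsto m A T B k j.
Proof.
by move=> kl /leadstoP[N _ lj]; apply/leadstoP; exists N.+1 => //; exact: walk_consl lj.
Qed.

Lemma leadsto_last_edge k j : leadsto m A T B k j -> exists l, edge l j.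
Proof. by case/leadstoP=> -[|N] // _ [l _ lj]; exists l. Qed.

Definition cycle_reachable (k : 'I_n) : Prop :=
  leadsto m A T B k k \/
  exists i, leadsto m A T B i i /\ leadsto m A T B i k.

Lemma cycle_reachable_edge k j : cycle_reachable k -> edge k j -> cycle_reachable j.
Proof.
move=> [kk|[i [ii ik]]] kj; right.
  by exists k; split=> //; exact: leadsto_rcons kj.
by exists i; split=> //; exact: leadsto_rcons kj.
Qed.

Definition reach_set (k : 'I_n) : {set 'I_n} := [set j | `[< leadsto m A T B k j >]].

Lemma reach_set_proper k j : ~ cycle_reachable j -> edge k j ->
  reach_set j \proper reach_set k.
Proof.
move=> not_crj kj; rewrite properE; apply/andP; split.
  by apply/fintype.subsetP => l; rewrite !inE => jl; exact: leadsto_consl kj jl.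
apply/negP => /fintype.subsetP /(_ j); rewrite !inE => /(_ (edge_leadsto kj)) jj.
by apply: not_crj; left.
Qed.

Definition null_transitions : set X :=
  [set x | exists k j, ~~ edge k j /\ B k x /\ preA A T (B j) x].

Lemma negligible_null_transitions : measurable A -> measurable_fun A T ->
  (forall k, measurable (B k)) -> m.-negligible null_transitions.
Proof.
move=> mA mT mB; pose F (kj : 'I_n * 'I_n) :=
  if edge kj.1 kj.2 then set0 else B kj.1 `&` preA A T (B kj.2).
apply: (negligibleS _ (negligible_bigcup_countable (F := F) _)).
  by move=> x [k [j [/negbTE kj Bkx]]]; exists (k, j) => //; rewrite /F /= kj.
move=> [k j]; rewrite /F /=; case: ifPn => [_|]; first exact: negligible_set0.
rewrite /edge /Cmat measure_gt0 negbK => /eqP kj0.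
by apply/negligibleP => //; apply: measurableI => //; exact: measurable_preA.
Qed.

End transition_graph.

Section admissible_weights.
Context (R : realType) (d : measure_display) (X : measurableType d)
  (m : {measure set X -> \bar R}) (A : set X) (T : X -> X) (alpha : R)
  (n : nat) (B : 'I_n -> set X).
Hypothesis mA : measurable A.
Hypothesis mT : measurable_fun A T.
Hypothesis nonsingular :
  forall E, measurable E -> (0 < m (preA A T E))%E -> (0 < m E)%E.
Hypothesis Ainf0 : m (Ainf A T) = 0%E.
Hypothesis alpha_gt0 : 0 < alpha.
Hypothesis alpha_lt1 : alpha < 1.
Hypothesis mB : forall k, measurable (B k).
Hypothesis Bdisj : forall k l, k != l -> B k `&` B l = set0.
Hypothesis Bcov : \bigcup_k B k = A.

Lemma Mstar_cases lam x k : lam ord0 = 0 -> B k x -> ~ null_transitions m A T B x ->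
  Mstar A T alpha B lam x = - (alpha * psi_coef lam k) \/
  exists2 j, edge m A T B k j &
    Mstar A T alpha B lam x = psi_coef lam j - alpha * psi_coef lam k.
Proof.
move=> lam0 Bkx regular_x; have [ATx|ATx] := pselect (A (T x)); last first.
  by left; exact: Mstar_exit.
have [j BjTx] := block_cover Bcov ATx; right; exists j; last exact: Mstar_move.
apply: contrapT => /negP kj; apply: regular_x; exists k, j.
do 3!split=> //.
by apply: (block_subset Bcov) Bkx.
Qed.

Variable lam : 'I_n.+1 -> R.
Hypothesis lam_adm : admissible m A T alpha B lam.
Local Notation mu := (psi_coef lam).

Lemma negligible_Mstar_gt0 :
  m.-negligible [set x | A x /\ 0 < Mstar A T alpha B lam x].
Proof.
case: lam_adm => _; apply: negligibleS => x [Ax Mx_gt0] /(_ Ax).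
by rewrite leNgt Mx_gt0.
Qed.

Lemma admissible_edge k j : edge m A T B k j -> mu j <= alpha * mu k.
Proof.
move=> kj; rewrite leNgt; apply/negP => decay_fails; move: kj; rewrite /edge /Cmat.
have mBkj : measurable (B k `&` preA A T (B j)).
  by apply: measurableI => //; exact: measurable_preA.
rewrite (measure_negligible mBkj) ?ltxx //.
apply: negligibleS negligible_Mstar_gt0 => x [Bkx [Ax BjTx]]; split=> //.
case: lam_adm => lam0 _; rewrite (Mstar_move alpha Bdisj Bcov lam0 Bkx BjTx).
by rewrite subr_gt0.
Qed.

Lemma negligible_block_weight_lt0 k : mu k < 0 -> m.-negligible (B k).
Proof.
case: lam_adm => lam0 _ mu_k_lt0.
pose S := \bigcup_(j in [set j | mu j < 0]) B j.
apply: (negligibleS (A := S)); first by move=> x Bkx; exists k.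
apply: (negligible_forward_invariant mA mT nonsingular Ainf0 _ negligible_Mstar_gt0).
  by move=> x [j _ Bjx]; exact: (block_subset Bcov Bjx).
move=> x [j /= mu_j_lt0 Bjx] /not_andP[]; first by have := block_subset Bcov Bjx.
move/negP; rewrite -leNgt; have [ATx|ATx] := pselect (A (T x)); last first.
  rewrite (Mstar_exit alpha Bdisj Bcov lam0 Bjx ATx) oppr_le0 pmulr_rge0 //.
  by rewrite leNgt mu_j_lt0.
have [l BlTx] := block_cover Bcov ATx.
rewrite (Mstar_move alpha Bdisj Bcov lam0 Bjx BlTx) subr_le0 => mu_l_le.
exists l => //=.
by apply: le_lt_trans mu_l_le _; rewrite pmulr_rlt0.
Qed.

Lemma admissible_target_ge0 l k : edge m A T B l k -> 0 <= mu k.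
Proof.
move=> lk; rewrite leNgt; apply/negP => /negligible_block_weight_lt0.
move/(measure_negligible (mB k)) => Bk0.
suff : (0 < m (B k))%E by rewrite Bk0 ltxx.
apply: (nonsingular (mB k)); apply: lt_le_trans lk _.
apply: le_measure; rewrite ?inE; last by move=> x [].
  by apply: measurableI => //; exact: measurable_preA.
exact: measurable_preA.
Qed.

Lemma admissible_walk N i j : walk m A T B N i j -> mu j <= alpha ^+ N * mu i.
Proof.
elim: N j => [|N IHN] j /=; first by move=> ->; rewrite expr0 mul1r.
case=> l /IHN il /admissible_edge lj; apply: le_trans lj _.
by rewrite exprS -mulrA ler_wpM2l // ltW.
Qed.

Lemma admissible_cycle_reachable k : cycle_reachable m A T B k -> mu k = 0.
Proof.
have on_cycle i : leadsto m A T B i i -> mu i = 0.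
  move=> ii; have [l /admissible_target_ge0 mu_i_ge0] := leadsto_last_edge ii.
  case/leadstoP: ii => N N_gt0 /admissible_walk mu_i_le.
  have gap : 0 < 1 - alpha ^+ N by rewrite subr_gt0 exprn_ilt1 ?ltW // -lt0n.
  apply/eqP; rewrite eq_le mu_i_ge0 andbT -(pmulr_rle0 _ gap).
  by rewrite mulrBl mul1r subr_le0.
case=> [/on_cycle //|[i [/on_cycle mu_i0 ik]]].
have [l /admissible_target_ge0 mu_k_ge0] := leadsto_last_edge ik.
case/leadstoP: ik => N _ /admissible_walk; rewrite mu_i0 mulr0 => mu_k_le0.
by apply/eqP; rewrite eq_le mu_k_le0.
Qed.

Lemma negligible_Msupp_cycle_reachable :
  m.-negligible ((\bigcup_(k in cycle_reachable m A T B) B k) `&`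
                 Msupp A T alpha B lam).
Proof.
case: lam_adm => lam0 _.
apply: (negligibleS _ (negligible_null_transitions m mA mT mB)).
move=> x [[k crk Bkx] [_ /eqP Mx]]; apply: contrapT => regular_x; apply: Mx.
have [->|[j kj ->]] := Mstar_cases lam0 Bkx regular_x.
  by rewrite (admissible_cycle_reachable crk) mulr0 oppr0.
by rewrite !admissible_cycle_reachable ?mulr0 ?subr0 //; exact: cycle_reachable_edge kj.
Qed.

End admissible_weights.

Section witness.
Context (R : realType) (d : measure_display) (X : measurableType d)
  (m : {measure set X -> \bar R}) (A : set X) (T : X -> X) (alpha : R)
  (n : nat) (B : 'I_n -> set X).
Hypothesis mA : measurable A.
Hypothesis mT : measurable_fun A T.
Hypothesis alpha_gt0 : 0 < alpha.
Hypothesis alpha_lt1 : alpha < 1.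
Hypothesis mB : forall k, measurable (B k).
Hypothesis Bdisj : forall k l, k != l -> B k `&` B l = set0.
Hypothesis Bcov : \bigcup_k B k = A.

Local Notation cr := (cycle_reachable m A T B).

Local Notation gamma := (2 / alpha).

(* Along an edge between blocks that are not cycle-reachable the reach set
   shrinks strictly, so since [alpha * gamma = 2] these weights decay faster
   than by the factor [alpha]. *)
Definition witness_coef (k : 'I_n) : R :=
  if `[< cr k >] then 0 else gamma ^+ #|reach_set m A T B k|.

Definition witness (i : 'I_n.+1) : R :=
  if unlift ord0 i is Some k then witness_coef k else 0.

Lemma gamma_gt1 : 1 < gamma.
Proof. by rewrite ltr_pdivlMr // mul1r (lt_trans alpha_lt1) // ltr1n. Qed.

Lemma witness0 : witness ord0 = 0.
Proof. by rewrite /witness unlift_none. Qed.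

Lemma psi_coef_witness k : psi_coef witness k = witness_coef k.
Proof. by rewrite /psi_coef /witness liftK. Qed.

Lemma witness_coef_cr k : cr k -> witness_coef k = 0.
Proof. by rewrite /witness_coef; case: asboolP. Qed.

Lemma witness_coef_gt0 k : ~ cr k -> 0 < witness_coef k.
Proof.
rewrite /witness_coef; case: asboolP => // _ _.
by rewrite exprn_gt0 // (lt_trans ltr01 gamma_gt1).
Qed.

Lemma witness_coef_decay k j : ~ cr k -> ~ cr j -> edge m A T B k j ->
  witness_coef j < alpha * witness_coef k.
Proof.
move=> not_crk not_crj kj; rewrite /witness_coef.
case: asboolP => [/not_crj|_] //; case: asboolP => [/not_crk|_] //.
have reach_lt := proper_card (reach_set_proper not_crj kj).
set r := #|reach_set m A T B j|.
have gr_gt0 : 0 < gamma ^+ r by rewrite exprn_gt0 // (lt_trans ltr01 gamma_gt1).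
apply: (@lt_le_trans _ _ (alpha * gamma ^+ r.+1)).
  by rewrite exprS mulrA [alpha * _]mulrC divfK ?gt_eqF // ltr_pMl // ltr1n.
by rewrite ler_pM2l // ler_weXn2l // ltW // gamma_gt1.
Qed.

Lemma Mstar_witness_lt0 x k : B k x -> ~ null_transitions m A T B x -> ~ cr k ->
  Mstar A T alpha B witness x < 0.
Proof.
move=> Bkx regular_x not_crk.
have [->|[j kj ->]] := Mstar_cases alpha Bdisj Bcov witness0 Bkx regular_x.
  by rewrite psi_coef_witness oppr_lt0 mulr_gt0 // witness_coef_gt0.
rewrite !psi_coef_witness subr_lt0; have [crj|not_crj] := pselect (cr j).
  by rewrite witness_coef_cr // mulr_gt0 // witness_coef_gt0.
exact: witness_coef_decay.
Qed.

Lemma Mstar_witness_le0 x k : B k x -> ~ null_transitions m A T B x ->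
  Mstar A T alpha B witness x <= 0.
Proof.
move=> Bkx regular_x; have [crk|not_crk] := pselect (cr k); last first.
  exact/ltW/(Mstar_witness_lt0 Bkx).
have [->|[j kj ->]] := Mstar_cases alpha Bdisj Bcov witness0 Bkx regular_x.
  by rewrite psi_coef_witness witness_coef_cr // mulr0 oppr0.
rewrite !psi_coef_witness !witness_coef_cr ?mulr0 ?subr0 //.
exact: cycle_reachable_edge kj.
Qed.

Lemma witness_admissible : admissible m A T alpha B witness.
Proof.
split; first exact: witness0.
apply: negligibleS (negligible_null_transitions m mA mT mB) => x /= Mx_le0.
apply: contrapT => regular_x; apply: Mx_le0 => Ax.
have [k Bkx] := block_cover Bcov Ax; exact: Mstar_witness_le0 Bkx regular_x.
Qed.

Lemma not_cycle_reachable_sub_Msupp_witness :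
  A `\` \bigcup_(k in cr) B k `<=`
  Msupp A T alpha B witness `|` null_transitions m A T B.
Proof.
move=> x [Ax not_Ux]; have [|regular_x] := pselect (null_transitions m A T B x).
  by right.
have [k Bkx] := block_cover Bcov Ax.
have not_crk : ~ cr k by move=> crk; apply: not_Ux; exists k.
by left; split=> //; rewrite lt_eqF // (Mstar_witness_lt0 Bkx).
Qed.

End witness.

Theorem lemma6 (R : realType) (d : measure_display) (X : measurableType d)
    (m : {measure set X -> \bar R}) (A : set X) (T : X -> X)
    (alpha : R) (n : nat) (B : 'I_n -> set X) :
  nonsingular_open_system m A T ->
  m (Ainf A T) = 0%E ->
  0 < alpha < 1 ->
  (forall k, measurable (B k)) ->
  (forall k l, k != l -> B k `&` B l = set0) ->
  \bigcup_k B k = A ->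
  let U := \bigcup_(k in [set k | leadsto m A T B k k \/
                  exists i, leadsto m A T B i i /\ leadsto m A T B i k]) B k in
  reduced_domain m A T alpha B U /\ measurable U.
Proof.
move=> [mA [_ [mT [_ [_ [nonsingular _]]]]]] Ainf0 /andP[alpha_gt0 alpha_lt1].
move=> mB Bdisj Bcov U.
split; last by apply: fin_bigcup_measurable => //; exact: finite_finset.
split.
- by move=> x [k _ Bkx]; exact: (block_subset Bcov Bkx).
- by move=> lam; exact: negligible_Msupp_cycle_reachable.
- move=> S mS Msupp_sub_S.
  have witness_adm := witness_admissible m mA mT alpha_gt0 alpha_lt1 mB Bdisj Bcov.
  apply: (negligibleS _ (negligibleU (Msupp_sub_S _ witness_adm)
                                      (negligible_null_transitions m mA mT mB))).
  by move=> x [/(not_cycle_reachable_sub_Msupp_witness alpha_gt0 alpha_lt1 Bdisj Bcov)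
    [Mx|Nx] notSx]; [left|right].
Qed.
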